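(* Let $\mathcal T$ be a triangulated category, linear over some field, with well-defined numerical Grothendieck group $\mathcal N(\mathcal T)$ of finite rank, and let $\sigma=(Z,\mathcal A)$ be a numerical stability condition on $\mathcal T$. Assume that $Z$ admits factorizations $Z=g_i\circ v_i$, $i=1,\dots,n$, through quotient lattices $v_i\colon\mathcal N(\mathcal T)\twoheadrightarrow\Lambda_i$, $g_i\colon\Lambda_i\to\mathbb C$, such that $\bigcap_i\ker(v_i)=\{0\}$, and that there are quadratic forms $Q_i$ on $\Lambda_i\otimes\mathbb R$ satisfying the support property (i.e. $Q_i(v_i(\mathcal E))\ge0$ for every $\sigma$-semistable $\mathcal E$ and $Q_i$ is negative definite on $\ker(g_i)$). Then for any $\lambda_1,\dots,\lambda_n>0$, $Z$ satisfies the support property on $\mathcal N(\mathcal T)$ with respect to $Q\coloneqq\lambda_1Q_1(v_1)+\dots+\lambda_nQ_n(v_n)$.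
   Context: The support property for $Z$ on $\mathcal N(\mathcal T)$ with respect to a quadratic form $Q$ on $\mathcal N(\mathcal T)\otimes\mathbb R$ means: $Q([\mathcal E])\ge0$ for every $\sigma$-semistable object $\mathcal E$, and $Q$ is negative definite on $\ker(Z)\subset\mathcal N(\mathcal T)\otimes\mathbb R$. *)

From HB Require Import structures.
From mathcomp Require Import all_boot all_order all_algebra.
From mathcomp Require Import reals.
Set Implicit Arguments. Unset Strict Implicit. Unset Printing Implicit Defensive.
Import Order.TTheory GRing.Theory Num.Theory.
Local Open Scope ring_scope.

Definition intmxR {R : realType} (m n : nat) (M : 'M[int]_(m, n)) : 'M[R]_(m, n) :=
  map_mx (fun z : int => z%:~R) M.

Definition qform (R : realType) (m : nat) (A : 'M[R]_m) (x : 'rV[R]_m) : R :=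
  (x *m A *m x^T) 0 0.

From HB Require Import structures.
From mathcomp Require Import all_boot all_order all_algebra.
From mathcomp Require Import reals.
From mathcomp Require Import ring.
Import Order.TTheory GRing.Theory Num.Theory.
Local Open Scope ring_scope.

(* On a nonzero x with x Z = 0, every summand of Q is <= 0 since x v_i lies in
   ker g_i, and the summand for an i with x v_i != 0 is < 0. Such an i exists
   because the v_i are integral: the common kernel of the v_i over R is spanned
   by its rational points, and a nonzero rational point can be scaled to a
   nonzero integral one, which the hypothesis on the common kernel excludes. *)

Lemma map_intr_mx_eq0 (F : numDomainType) {m n} (M : 'M[int]_(m, n)) :
  (map_mx intr M : 'M[F]_(m, n)) = 0 -> M = 0.
Proof.
move=> M0; apply/matrixP=> a b; move/matrixP/(_ a b): M0.
by rewrite !mxE => /eqP; rewrite intr_eq0 => /eqP.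
Qed.

Lemma rV_rat_scale_int {r} (u : 'rV[rat]_r) :
  exists d : int, d != 0 /\ exists w : 'rV[int]_r, map_mx intr w = d%:~R *: u.
Proof.
exists (\prod_(j < r) denq (u 0 j)); split.
  by apply/lt0r_neq0/prodr_gt0 => j _; apply: denq_gt0.
exists (\row_j (numq (u 0 j) * \prod_(l < r | l != j) denq (u 0 l))).
apply/matrixP=> a j; rewrite !mxE (ord1 a) intrM numqE.
by rewrite [in RHS](bigD1 j) //= intrM; ring.
Qed.

Section CommonKernel.

Variables (r : nat) (I : finType) (m : I -> nat).
Variable V : forall i, 'M[int]_(r, m i).
Hypothesis V_ker : forall x : 'rV[int]_r, (forall i, x *m V i = 0) -> x = 0.

Lemma common_kernel_rat_eq0 (u : 'rV[rat]_r) :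
  (forall i, u *m map_mx intr (V i) = 0) -> u = 0.
Proof.
move=> uV0; have [d [d_neq0 [w wE]]] := rV_rat_scale_int u.
have w0 : w = 0.
  apply: V_ker => i; apply: (@map_intr_mx_eq0 rat).
  by rewrite map_mxM wE -scalemxAl uV0 scaler0.
move: wE; rewrite w0 map_mx0 => /esym/eqP; rewrite scaler_eq0 intr_eq0.
by rewrite (negPf d_neq0) => /eqP.
Qed.

Lemma common_kernel_eq0 (F : numFieldType) (x : 'rV[F]_r) :
  (forall i, x *m map_mx intr (V i) = 0) -> x = 0.
Proof.
move=> xV0.
pose K := (\bigcap_i kermx (map_mx intr (V i) : 'M[rat]_(r, m i)))%MS.
have K0 : K == 0.
  rewrite -nz_row_eq0; apply/eqP/common_kernel_rat_eq0 => i.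
  by apply/sub_kermxP/(submx_trans (nz_row_sub K))/bigcapmx_inf.
have VE i :
    map_mx intr (V i) = map_mx ratr (map_mx intr (V i) : 'M[rat]_(r, m i)).
  by apply/matrixP=> a b; rewrite !mxE ratr_int.
suff : (x <= map_mx ratr K)%MS by rewrite (eqP K0) map_mx0 submx0 => /eqP.
have : (x <= \bigcap_i map_mx ratr (kermx (map_mx intr (V i))))%MS.
  by apply/sub_bigcapmxP => i _; rewrite map_kermx -VE; apply/sub_kermxP.
move/submx_trans; apply; rewrite /K.
elim/big_rec2: _ => [|i B C _ BC]; first by rewrite map_mx1.
by rewrite map_capmx capmxS.
Qed.

End CommonKernel.

Lemma qform0 (R : realType) {m} (A : 'M[R]_m) : qform A 0 = 0.
Proof. by rewrite /qform !mul0mx mxE. Qed.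

Lemma sumr_lt0_witness (R : numDomainType) (I : finType) (F : I -> R) i :
  (forall j, F j <= 0) -> F i < 0 -> \sum_j F j < 0.
Proof.
move=> F_le0 Fi_lt0; rewrite (bigD1 i) //=.
by have := ltr_leD Fi_lt0 (sumr_le0 _ (fun j _ => F_le0 j)); rewrite addr0.
Qed.

Theorem lemma7p5
  (R : realType) (r n : nat)
  (semistable : 'rV[int]_r -> Prop)
  (Z : 'M[R]_(r, 2))
  (m : 'I_n -> nat)
  (V : forall i : 'I_n, 'M[int]_(r, m i))
  (G : forall i : 'I_n, 'M[R]_(m i, 2))
  (A : forall i : 'I_n, 'M[R]_(m i))
  (lambda : 'I_n -> R)
  (hV_surj : forall i (y : 'rV[int]_(m i)), exists x : 'rV[int]_r, x *m V i = y)
  (hfact : forall i, Z = intmxR (V i) *m G i)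
  (hker : forall x : 'rV[int]_r, (forall i, x *m V i = 0) -> x = 0)
  (hQ_ss : forall i (e : 'rV[int]_r), semistable e ->
             0 <= qform (A i) (intmxR (e *m V i)))
  (hQ_neg : forall i (y : 'rV[R]_(m i)), y *m G i = 0 -> y != 0 ->
             qform (A i) y < 0)
  (hlambda : forall i, 0 < lambda i) :
  let Q := fun x : 'rV[R]_r =>
             \sum_(i < n) lambda i * qform (A i) (x *m intmxR (V i)) in
  (forall e : 'rV[int]_r, semistable e -> 0 <= Q (intmxR e)) /\
  (forall x : 'rV[R]_r, x *m Z = 0 -> x != 0 -> Q x < 0).
Proof.
move=> Q; split=> [e e_ss | x xZ0 x_neq0].
  apply: sumr_ge0 => i _; rewrite mulr_ge0 ?(ltW (hlambda i)) //.
  by rewrite /intmxR -map_mxM; apply: hQ_ss.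
have xVG0 i : x *m intmxR (V i) *m G i = 0 by rewrite -mulmxA -hfact.
have [i xVi_neq0] : exists i, x *m intmxR (V i) != 0.
  apply/existsP; rewrite -negb_forall; apply: contra x_neq0 => /forallP xV0.
  by apply/eqP; apply: (@common_kernel_eq0 _ _ _ _ hker R) => i; apply/eqP/xV0.
rewrite /Q; apply: (@sumr_lt0_witness R _ _ i) => [j|].
  by rewrite pmulr_rle0 //; have [->|xVj_neq0] := eqVneq (x *m intmxR (V j)) 0;
    rewrite ?qform0 // ltW ?hQ_neg.
by rewrite pmulr_rlt0 ?hQ_neg.
Qed.
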